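(* Let $S=\{z\in\mathbb{C}: |\operatorname{Arg} z|\geq 3\pi/4\}$. For every $z\in S$ one has $\operatorname{Re}(\operatorname{erfc}(z))\geq 1$, where $\operatorname{erfc}(z)=\frac{2}{\sqrt{\pi}}\int_z^{\infty}e^{-u^2}\,du$. Moreover, equality $\operatorname{Re}(\operatorname{erfc}(z))=1$ holds for $z\in S$ if and only if $z=0$.
   Context: $\operatorname{Arg} z$ denotes the principal argument of $z$, taking values in $(-\pi,\pi]$; the point $z=0$ is regarded as belonging to $S$. The complementary error function $\operatorname{erfc}$ is the entire function $\operatorname{erfc}(z)=1-\operatorname{erf}(z)$ with $\operatorname{erf}(z)=\frac{2}{\sqrt{\pi}}\int_0^z e^{-u^2}\,du$ (integral along any path from $0$ to $z$). *)

From Stdlib Require Import Reals.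
From Coquelicot Require Import Coquelicot.
Open Scope R_scope.

Definition cexp (z : C) : C :=
  (exp (Re z) * cos (Im z), exp (Re z) * sin (Im z)).

Definition is_Arg (z : C) (theta : R) : Prop :=
  - PI < theta <= PI /\ z = (Cmod z * cos theta, Cmod z * sin theta).

Definition in_S (z : C) : Prop :=
  z = 0%C \/ exists theta, is_Arg z theta /\ 3 * PI / 4 <= Rabs theta.

(* erf z = 2/sqrt(pi) * int_0^z e^(-u^2) du, integrated along the straight
   segment u = t z, t in [0,1]:  int_0^1 z e^(-(t z)^2) dt. *)
Definition erf (z : C) : C :=
  Cmult (RtoC (2 / sqrt PI))
    (RInt (V := C_R_CompleteNormedModule)
       (fun t : R => Cmult z (cexp (Copp (Cmult (Cmult (RtoC t) z) (Cmult (RtoC t) z))))) 0 1).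

Definition erfc (z : C) : C := Cminus 1%C (erf z).

(** Write [z = -x + i b] with [x > 0] and [|b| <= x], which describes the sector
    minus the origin up to the symmetry [b -> -b].  Along the segment [[0, z]],
    [Re (erf z)] is a positive multiple of [F b = int_0^1 Re (z e^(-t^2 z^2)) dt].
    The [b]-derivative of the integrand is an exact [t]-derivative, so
    [F' u = - e^(u^2 - x^2) sin (2 x u)], which for [u >= 0] is at most the
    derivative of [K u = e^(u^2 - x^2) (1 + cos (2 x u)) / (2 x)].  Hence
    [x F b <= x (F 0 - K 0 + K b) <= 1 - e^(-x^2) - x int_0^x e^(-u^2) du < 0],
    the last one because [int_0^y e^(-u^2) du - y e^(-y^2)], the derivative of
    [y int_0^y e^(-u^2) du + e^(-y^2)], is positive for [y > 0]. *)

From Stdlib Require Import Reals Lra.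
From Coquelicot Require Import Coquelicot.
Open Scope R_scope.

Lemma is_derive_pos_lt (f df : R -> R) a b : a < b ->
  (forall x, a <= x <= b -> is_derive f x (df x)) ->
  (forall x, a < x < b -> 0 < df x) -> f a < f b.
Proof.
  intros Hab Hf Hdf.
  destruct (MVT_cor2 f df a b Hab) as [c [E Hc]].
  { intros c Hc. now apply is_derive_Reals, Hf. }
  specialize (Hdf c Hc). nra.
Qed.

Lemma is_derive_nonpos_le (f df : R -> R) a b : a <= b ->
  (forall x, a <= x <= b -> is_derive f x (df x)) ->
  (forall x, a <= x <= b -> df x <= 0) -> f b <= f a.
Proof.
  intros [Hab | <-] Hf Hdf; [|lra].
  destruct (MVT_cor2 f df a b Hab) as [c [E Hc]].
  { intros c Hc. now apply is_derive_Reals, Hf. }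
  assert (df c <= 0) by (apply Hdf; lra). nra.
Qed.

Lemma ex_RInt_derivable (f : R -> R) a b : (forall x, ex_derive f x) -> ex_RInt f a b.
Proof.
  intros Hf. apply (ex_RInt_continuous (V := R_CompleteNormedModule)). intros x _.
  now apply (ex_derive_continuous (V := R_NormedModule)).
Qed.

Lemma Re_RInt (f : R -> C) a b :
  ex_RInt (fun t => Re (f t)) a b -> ex_RInt (fun t => Im (f t)) a b ->
  Re (RInt (V := C_R_CompleteNormedModule) f a b) = RInt (fun t => Re (f t)) a b.
Proof.
  intros [u Hu] [v Hv].
  rewrite (is_RInt_unique (V := C_R_CompleteNormedModule) f a b (u, v)).
  - symmetry. now apply is_RInt_unique.
  - now apply (is_RInt_fct_extend_pair (U := R_NormedModule) (V := R_NormedModule)).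
Qed.

Definition erf_integrand (z : C) (t : R) : C :=
  Cmult z (cexp (Copp (Cmult (Cmult (RtoC t) z) (Cmult (RtoC t) z)))).

Definition erf_re_integrand (a b t : R) : R :=
  exp (t * t * (b * b - a * a)) * (a * cos (2 * t * t * a * b) + b * sin (2 * t * t * a * b)).

Lemma Re_erf_integrand a b t : Re (erf_integrand (a, b) t) = erf_re_integrand a b t.
Proof.
  unfold erf_integrand, cexp, erf_re_integrand; simpl.
  replace (- ((t * a - 0 * b) * (t * b + 0 * a) + (t * b + 0 * a) * (t * a - 0 * b)))
    with (- (2 * t * t * a * b)) by ring.
  replace (- ((t * a - 0 * b) * (t * a - 0 * b) - (t * b + 0 * a) * (t * b + 0 * a)))
    with (t * t * (b * b - a * a)) by ring.
  rewrite cos_neg, sin_neg. ring.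
Qed.

Lemma Re_erf a b : Re (erf (a, b)) = 2 / sqrt PI * RInt (erf_re_integrand a b) 0 1.
Proof.
  change (Re (Cmult (RtoC (2 / sqrt PI))
    (RInt (V := C_R_CompleteNormedModule) (erf_integrand (a, b)) 0 1))
    = 2 / sqrt PI * RInt (erf_re_integrand a b) 0 1).
  transitivity (2 / sqrt PI * Re (RInt (V := C_R_CompleteNormedModule) (erf_integrand (a, b)) 0 1)).
  { simpl. ring. }
  rewrite Re_RInt.
  - now rewrite (RInt_ext _ (erf_re_integrand a b)) by (intros; apply Re_erf_integrand).
  - apply ex_RInt_derivable. intros. unfold erf_integrand, cexp; simpl. auto_derive; auto.
  - apply ex_RInt_derivable. intros. unfold erf_integrand, cexp; simpl. auto_derive; auto.
Qed.

Definition erf_re_integrand_dIm (a b t : R) : R :=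
  exp (t * t * (b * b - a * a)) *
    (sin (2 * t * t * a * b) * (1 + 2 * t * t * (b * b - a * a))
     + 4 * t * t * a * b * cos (2 * t * t * a * b)).

Lemma is_derive_erf_re_integrand_Im a b t :
  is_derive (fun u => erf_re_integrand a u t) b (erf_re_integrand_dIm a b t).
Proof. unfold erf_re_integrand, erf_re_integrand_dIm. auto_derive; auto. unfold Rminus. ring. Qed.

(* The derivative in [Im z] of the integrand is an exact derivative in [t]. *)
Lemma is_derive_erf_re_integrand_dIm_primitive a b t :
  is_derive (fun s => s * exp (s * s * (b * b - a * a)) * sin (2 * s * s * a * b)) t
    (erf_re_integrand_dIm a b t).
Proof. unfold erf_re_integrand_dIm. auto_derive; auto. unfold Rminus. ring. Qed.

Lemma RInt_erf_re_integrand_dIm a b :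
  RInt (erf_re_integrand_dIm a b) 0 1 = exp (b * b - a * a) * sin (2 * a * b).
Proof.
  pose (p s := s * exp (s * s * (b * b - a * a)) * sin (2 * s * s * a * b)).
  apply is_RInt_unique.
  replace (exp (b * b - a * a) * sin (2 * a * b)) with (minus (p 1) (p 0)).
  2: { unfold p, minus, plus, opp; simpl. rewrite !Rmult_1_l, !Rmult_1_r. ring. }
  apply (is_RInt_derive p).
  - intros. apply is_derive_erf_re_integrand_dIm_primitive.
  - intros. apply (ex_derive_continuous (V := R_NormedModule)).
    unfold erf_re_integrand_dIm. auto_derive; auto.
Qed.

Ltac continuity_2d :=
  repeat first
    [ apply continuity_2d_pt_mult
    | apply continuity_2d_pt_plus
    | apply continuity_2d_pt_minus
    | apply continuity_2d_pt_opp
    | apply (continuity_1d_2d_pt_comp exp); [apply derivable_continuous_pt, derivable_pt_exp|]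
    | apply (continuity_1d_2d_pt_comp sin); [apply derivable_continuous_pt, derivable_pt_sin|]
    | apply (continuity_1d_2d_pt_comp cos); [apply derivable_continuous_pt, derivable_pt_cos|]
    | apply continuity_2d_pt_id1
    | apply continuity_2d_pt_id2
    | apply continuity_2d_pt_const ].

Lemma is_derive_RInt_erf_re_integrand a b :
  is_derive (fun u => RInt (erf_re_integrand a u) 0 1) b (exp (b * b - a * a) * sin (2 * a * b)).
Proof.
  rewrite <- RInt_erf_re_integrand_dIm.
  rewrite (RInt_ext _ (fun t => Derive (fun u => erf_re_integrand a u t) b))
    by (intros; symmetry; apply is_derive_unique, is_derive_erf_re_integrand_Im).
  apply (is_derive_RInt_param (fun u t => erf_re_integrand a u t)).
  - apply filter_forall. intros u t _. eexists. apply is_derive_erf_re_integrand_Im.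
  - intros t _.
    apply (continuity_2d_pt_ext (fun u s => erf_re_integrand_dIm a u s)).
    { intros u s. symmetry. apply is_derive_unique, is_derive_erf_re_integrand_Im. }
    unfold erf_re_integrand_dIm. continuity_2d.
  - apply filter_forall. intros u. apply ex_RInt_derivable.
    intros. unfold erf_re_integrand. auto_derive; auto.
Qed.

Definition gauss_RInt (x : R) : R := RInt (fun u => exp (- (u * u))) 0 x.

Lemma is_derive_gauss_RInt x : is_derive gauss_RInt x (exp (- (x * x))).
Proof.
  apply (is_derive_RInt (V := R_NormedModule) (fun u => exp (- (u * u))) gauss_RInt 0).
  - apply filter_forall. intros y. apply (RInt_correct (V := R_CompleteNormedModule)).
    apply ex_RInt_derivable. intros. auto_derive; auto.
  - apply (ex_derive_continuous (V := R_NormedModule)). auto_derive; auto.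
Qed.

Lemma gauss_RInt_0 : gauss_RInt 0 = 0.
Proof. apply (RInt_point (V := R_CompleteNormedModule)). Qed.

Lemma gauss_RInt_gt x : 0 < x -> x * exp (- (x * x)) < gauss_RInt x.
Proof.
  intros Hx.
  replace (x * exp (- (x * x))) with (RInt (fun _ => exp (- (x * x))) 0 x)
    by (rewrite RInt_const; unfold scal; simpl; unfold mult; simpl; ring).
  apply RInt_lt; auto.
  - intros. apply (ex_derive_continuous (V := R_NormedModule)). auto_derive; auto.
  - intros. apply continuous_const.
  - intros u Hu. apply exp_increasing. nra.
Qed.

Lemma gauss_RInt_lower_bound x : 0 < x -> 1 - exp (- (x * x)) < x * gauss_RInt x.
Proof.
  intros Hx.
  enough (0 * gauss_RInt 0 + exp (- (0 * 0)) < x * gauss_RInt x + exp (- (x * x)))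
    by (rewrite gauss_RInt_0, Rmult_0_l, Ropp_0, exp_0 in H; lra).
  apply (is_derive_pos_lt (fun y => y * gauss_RInt y + exp (- (y * y)))
           (fun y => gauss_RInt y - y * exp (- (y * y)))); auto.
  - intros y _. auto_derive.
    + eexists. apply is_derive_gauss_RInt.
    + replace (Derive (fun u => gauss_RInt u) y) with (exp (- (y * y)))
        by (symmetry; apply is_derive_unique, is_derive_gauss_RInt).
      ring.
  - intros y Hy. pose proof (gauss_RInt_gt y). lra.
Qed.

Lemma RInt_erf_re_integrand_real x : RInt (erf_re_integrand (- x) 0) 0 1 = - gauss_RInt x.
Proof.
  assert (Hlin : RInt (fun t => scal x (exp (- ((x * t + 0) * (x * t + 0))))) 0 1 = gauss_RInt x).
  { rewrite (RInt_comp_lin (V := R_CompleteNormedModule) (fun u => exp (- (u * u)))).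
    - unfold gauss_RInt. f_equal; ring.
    - apply ex_RInt_derivable. intros. auto_derive; auto. }
  rewrite <- Hlin, <- (RInt_opp (V := R_CompleteNormedModule)).
  - apply RInt_ext. intros t _. unfold erf_re_integrand, opp, scal; simpl; unfold mult; simpl.
    rewrite !Rmult_0_r, cos_0, sin_0. replace (t * t * (0 - - x * - x)) with (- ((x * t + 0) * (x * t + 0))) by ring. ring.
  - apply ex_RInt_derivable. intros. unfold scal; simpl; unfold mult; simpl. auto_derive; auto.
Qed.

Definition erf_re_majorant (x u : R) : R := exp (u * u - x * x) * (1 + cos (2 * x * u)) / (2 * x).

Lemma RInt_erf_re_integrand_sub_majorant_le x b : 0 < x -> 0 <= b ->
  RInt (erf_re_integrand (- x) b) 0 1 - erf_re_majorant x b
  <= RInt (erf_re_integrand (- x) 0) 0 1 - erf_re_majorant x 0.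
Proof.
  intros Hx Hb.
  apply (is_derive_nonpos_le
           (fun u => RInt (erf_re_integrand (- x) u) 0 1 - erf_re_majorant x u)
           (fun u => - (exp (u * u - x * x) * u * (1 + cos (2 * x * u)) / x))); auto.
  - intros u _.
    replace (- (exp (u * u - x * x) * u * (1 + cos (2 * x * u)) / x))
      with (exp (u * u - - x * - x) * sin (2 * - x * u)
            - exp (u * u - x * x) * (u * (1 + cos (2 * x * u)) / x - sin (2 * x * u))).
    + apply (is_derive_minus (K := R_AbsRing) (V := R_NormedModule)).
      * apply is_derive_RInt_erf_re_integrand.
      * unfold erf_re_majorant. auto_derive; auto. unfold Rminus. field. lra.
    + replace (2 * - x * u) with (- (2 * x * u)) by ring.
      replace (u * u - - x * - x) with (u * u - x * x) by ring.
      rewrite sin_neg. field. lra.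
  - intros u Hu.
    pose proof (exp_pos (u * u - x * x)). pose proof (COS_bound (2 * x * u)).
    assert (0 <= exp (u * u - x * x) * u * (1 + cos (2 * x * u)) / x).
    { apply Rmult_le_pos; [|apply Rlt_le, Rinv_0_lt_compat; lra].
      apply Rmult_le_pos; nra. }
    lra.
Qed.

Lemma erf_re_majorant_0 x : 0 < x -> x * erf_re_majorant x 0 = exp (- (x * x)).
Proof.
  intros Hx. unfold erf_re_majorant.
  replace (2 * x * 0) with 0 by ring. rewrite cos_0.
  replace (0 * 0 - x * x) with (- (x * x)) by ring. field. lra.
Qed.

Lemma erf_re_majorant_le x b : 0 < x -> 0 <= b <= x -> x * erf_re_majorant x b <= 1.
Proof.
  intros Hx Hb. unfold erf_re_majorant.
  replace (x * (exp (b * b - x * x) * (1 + cos (2 * x * b)) / (2 * x)))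
    with (exp (b * b - x * x) * ((1 + cos (2 * x * b)) / 2)) by (field; lra).
  assert (exp (b * b - x * x) <= 1).
  { rewrite <- exp_0. destruct (Req_dec (b * b - x * x) 0) as [-> | Hne]; [lra|].
    left. apply exp_increasing. nra. }
  pose proof (exp_pos (b * b - x * x)). pose proof (COS_bound (2 * x * b)).
  nra.
Qed.

Lemma RInt_erf_re_integrand_lt_0 x b : 0 < x -> 0 <= b <= x ->
  RInt (erf_re_integrand (- x) b) 0 1 < 0.
Proof.
  intros Hx Hb.
  pose proof (RInt_erf_re_integrand_sub_majorant_le x b Hx (proj1 Hb)) as Hmono.
  rewrite RInt_erf_re_integrand_real in Hmono.
  pose proof (erf_re_majorant_0 x Hx). pose proof (erf_re_majorant_le x b Hx Hb).
  pose proof (gauss_RInt_lower_bound x Hx).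
  nra.
Qed.

Lemma erf_re_integrand_Im_opp a b t : erf_re_integrand a (- b) t = erf_re_integrand a b t.
Proof.
  unfold erf_re_integrand.
  replace (2 * t * t * a * - b) with (- (2 * t * t * a * b)) by ring.
  rewrite cos_neg, sin_neg. replace (- b * - b) with (b * b) by ring. ring.
Qed.

Lemma sin_cos_sector psi : 3 * PI / 4 <= psi <= PI -> cos psi < 0 /\ Rabs (sin psi) <= - cos psi.
Proof.
  intros Hpsi. pose proof PI_RGT_0.
  assert (Hsin : 0 <= sin psi) by (apply sin_ge_0; lra).
  (* [sin psi + cos psi = sqrt 2 * sin (psi + PI / 4)] *)
  assert (Hsum : sin (psi + PI / 4) <= 0) by (apply sin_le_0; lra).
  rewrite sin_plus, sin_PI4, cos_PI4 in Hsum.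
  assert (0 < sqrt 2) by (apply sqrt_lt_R0; lra).
  assert (sin psi + cos psi <= 0).
  { replace (sin psi + cos psi)
      with (sqrt 2 * (sin psi * (1 / sqrt 2) + cos psi * (1 / sqrt 2))) by (field; lra).
    nra. }
  split; [apply cos_lt_0; lra|]. rewrite Rabs_right; lra.
Qed.

Lemma in_S_cone z : in_S z -> z <> 0%C -> Re z < 0 /\ Rabs (Im z) <= - Re z.
Proof.
  intros [-> | [th [[Hth Hz] Habs]]] Hnz; [contradiction|].
  assert (HRe : Re z = Cmod z * cos th) by (rewrite Hz at 1; reflexivity).
  assert (HIm : Im z = Cmod z * sin th) by (rewrite Hz at 1; reflexivity).
  assert (Hr : 0 < Cmod z).
  { destruct (Cmod_ge_0 z) as [|Hr]; auto. now contradiction Hnz; apply Cmod_eq_0. }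
  assert (Htrig : cos th < 0 /\ Rabs (sin th) <= - cos th).
  { destruct (Rle_or_lt 0 th).
    - rewrite Rabs_right in Habs by lra. apply sin_cos_sector. lra.
    - rewrite Rabs_left in Habs by lra.
      rewrite <- (Ropp_involutive th), cos_neg, sin_neg, Rabs_Ropp.
      apply sin_cos_sector. lra. }
  rewrite HRe, HIm, Rabs_mult, (Rabs_right (Cmod z)) by lra.
  split; nra.
Qed.

Lemma Re_erf_lt_0 z : in_S z -> z <> 0%C -> Re (erf z) < 0.
Proof.
  intros Hz Hnz. destruct (in_S_cone z Hz Hnz) as [Hp Hq].
  destruct z as [p q]. simpl in Hp, Hq.
  rewrite Re_erf.
  assert (HI : RInt (erf_re_integrand p q) 0 1 < 0).
  { replace p with (- (- p)) by ring.
    destruct (Rle_or_lt 0 q).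
    - rewrite Rabs_right in Hq by lra.
      apply RInt_erf_re_integrand_lt_0; lra.
    - rewrite Rabs_left in Hq by lra.
      rewrite (RInt_ext _ (erf_re_integrand (- - p) (- q)))
        by (intros; symmetry; apply erf_re_integrand_Im_opp).
      apply RInt_erf_re_integrand_lt_0; lra. }
  assert (0 < 2 / sqrt PI) by (apply Rdiv_lt_0_compat; [lra | apply sqrt_lt_R0, PI_RGT_0]).
  nra.
Qed.

Lemma Re_erf_0 : Re (erf 0%C) = 0.
Proof.
  pose proof (RInt_erf_re_integrand_real 0) as H.
  rewrite gauss_RInt_0, Ropp_0 in H.
  change (Re (erf (0, 0)) = 0). rewrite Re_erf, H. ring.
Qed.

Theorem mainTheorem1 :
  forall z : C, in_S z ->
    1 <= Re (erfc z) /\ (Re (erfc z) = 1 <-> z = 0%C).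
Proof.
  intros z Hz.
  replace (Re (erfc z)) with (1 - Re (erf z)) by (unfold erfc; simpl; ring).
  destruct (Ceq_dec z 0%C) as [-> | Hnz].
  - rewrite Re_erf_0. split; [lra | split; [reflexivity | lra]].
  - pose proof (Re_erf_lt_0 z Hz Hnz). split; [lra|].
    split; [lra | intros; contradiction].
Qed.
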